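(* In the setting below, with probability at least $1-\delta$ the following holds: for any pair of observations $j,j'$ clustered together in $\widehat{\mathcal S}$, there exists a hidden state $i$ such that $j,j'\in\mathcal Y_i$. Finally, $\widehat{\mathcal S}\to\mathcal S$ as $N$ tends to infinity.
   Context: A rich-observation MDP (ROMDP) consists of finite sets of hidden states $\mathcal X=[X]$, observations $\mathcal Y=[Y]$, actions $\mathcal A=[A]$ with $X\le Y$; transitions $T_{i',i,l}=\mathbb P(x'=i'\mid x=i,a=l)$; observation matrix $O_{j,i}=\mathbb P(y=j\mid x=i)$ with each observation $j$ having exactly one hidden state with $O_{j,i}>0$, and $\mathcal Y_i=\{j:O_{j,i}>0\}$; rewards in $[0,1]$ depending on hidden state and action. Assumption 1: for every deterministic policy $\pi:\mathcal Y\to\mathcal A$ the induced Markov chain on hidden states is ergodic. Assumption 2: each $T_{\cdot,\cdot,l}$ is full rank. For a policy $\pi$: $\omega_\pi^{(l)}(i)=\mathbb P_\pi(x=i\mid a=l)$ under stationarity, $\mathcal X_\pi^{(l)}=\{i:\omega_\pi^{(l)}(i)>0\}$; $[V_2^{(l)}]_{j,i}=\mathbb P(y_t=j\mid x_t=i,a_t=l)$ for $i\in\mathcal X_\pi^{(l)}$ (stationary process). A trajectory of $N$ steps is generated by $\pi$; $N(l)$ is the number of steps where action $l$ is taken; $\widehat V_2^{(l)}$ is the spectral (tensor-decomposition) estimate of $V_2^{(l)}$ from this trajectory, which satisfies, with probability at least $1-\delta$ for all $l$ and $i\in\mathcal X_\pi^{(l)}$ once $N(l)$ exceeds a threshold,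 $\|[V_2^{(l)}]_{\cdot,i}-[\widehat V_2^{(l)}]_{\cdot,i}\|_2\le\mathcal B_O^{(l)}:=C_2\sqrt{\log(2Y^{3/2}/\delta)/N(l)}$ with a problem-dependent constant $C_2$. Define the binary matrix $[\widetilde V_2^{(l)}]_{j,i}=1$ if $[\widehat V_2^{(l)}]_{j,i}\ge\mathcal B_O^{(l)}$ and $0$ otherwise; clusters $\widehat{\mathcal Y}_i^{(l)}=\{j:[\widetilde V_2^{(l)}]_{j,i}>0\}$; $\widehat{\mathcal Y}^{\mathsf c}=\mathcal Y\setminus\bigcup_{i,l}\widehat{\mathcal Y}_i^{(l)}$; $\widehat{\mathcal S}$ consists of the clusters $\widehat{\mathcal Y}_i^{(l)}$ and the singletons of $\widehat{\mathcal Y}^{\mathsf c}$. The limiting space $\mathcal S$ consists of the clusters $\{j:[V_2^{(l)}]_{j,i}>0\}$ ($l\in\mathcal A$, $i\in\mathcal X_\pi^{(l)}$) and the singletons of observations in none of them. *)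

From HB Require Import structures.
From mathcomp Require Import all_boot all_order all_algebra.
From mathcomp Require Import reals exp.
Set Implicit Arguments. Unset Strict Implicit. Unset Printing Implicit Defensive.
Import Order.TTheory GRing.Theory Num.Theory.
Local Open Scope ring_scope.

(* Conventions: hidden states 'I_nX, observations 'I_nY, actions 'I_nA.
   T l : 'M_nX with (T l) i' i = P(x' = i' | x = i, a = l).
   O : 'M_(nY, nX) with O j i = P(y = j | x = i).                        *)

Section ROMDP.
Variable R : realType.

Definition colstoch m n (M : 'M[R]_(m, n)) : Prop :=
  (forall i j, 0 <= M i j) /\ (forall j, \sum_i M i j = 1).

Definition distribution n (p : 'I_n -> R) : Prop :=
  (forall i, 0 <= p i) /\ \sum_i p i = 1.

Definition induced_chain nX nY nA (O : 'M[R]_(nY, nX)) (T : 'I_nA -> 'M[R]_nX)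
  (p : 'I_nY -> 'I_nA) : 'M[R]_nX :=
  \matrix_(i', i) \sum_j O j i * T (p j) i' i.

Definition mxpow n (M : 'M[R]_n) (k : nat) : 'M[R]_n := iter k (mulmx M) 1%:M.

(* k-step transition probability from i to i' is (mxpow M k) i' i *)
Definition irreducible_chain n (M : 'M[R]_n) : Prop :=
  forall i i', exists k, 0 < mxpow M k i' i.

Definition aperiodic_chain n (M : 'M[R]_n) : Prop :=
  forall i (d : nat),
    (forall k, (0 < k)%N -> 0 < mxpow M k i i -> (d %| k)%N) -> d = 1%N.

Definition ergodic_chain n (M : 'M[R]_n) : Prop :=
  irreducible_chain M /\ aperiodic_chain M.

Definition stationary n (M : 'M[R]_n) (rho : 'I_n -> R) : Prop :=
  distribution rho /\ forall i', \sum_i M i' i * rho i = rho i'.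

Section Policy.
Variables (nX nY nA : nat) (O : 'M[R]_(nY, nX)) (pi : 'I_nY -> 'I_nA)
          (rho : 'I_nX -> R).

(* stationary joint law P(x = i, y = j, a = l) under policy pi *)
Definition joint (i : 'I_nX) (j : 'I_nY) (l : 'I_nA) : R :=
  rho i * O j i * (pi j == l)%:R.

(* omega_pi^(l)(i) = P(x = i | a = l) *)
Definition omega (l : 'I_nA) (i : 'I_nX) : R :=
  (\sum_j joint i j l) / (\sum_i0 \sum_j joint i0 j l).

Definition Xpi (l : 'I_nA) : {set 'I_nX} := [set i | 0 < omega l i].

(* [V_2^(l)]_{j,i} = P(y = j | x = i, a = l) *)
Definition V2 (l : 'I_nA) : 'M[R]_(nY, nX) :=
  \matrix_(j, i) (joint i j l / \sum_j0 joint i j0 l).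

End Policy.

Definition Ycl nX nY (O : 'M[R]_(nY, nX)) (i : 'I_nX) : {set 'I_nY} :=
  [set j | 0 < O j i].

Definition colnorm m (v : 'I_m -> R) : R := Num.sqrt (\sum_j v j ^+ 2).

Definition BO (C2 : R) (nY : nat) (delta : R) (Nl : nat) : R :=
  C2 * Num.sqrt (ln (2 * (nY%:R `^ (3%:R / 2%:R)) / delta) / Nl%:R).

Definition Vtilde nX nY (Vh : 'M[R]_(nY, nX)) (b : R) : 'M[R]_(nY, nX) :=
  \matrix_(j, i) (if b <= Vh j i then 1 else 0).

Definition cluster_space nX nY nA (Xs : 'I_nA -> {set 'I_nX})
  (clus : 'I_nA -> 'I_nX -> {set 'I_nY}) : {set {set 'I_nY}} :=
  [set clus l i | l in 'I_nA, i in Xs l] :|: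
  [set [set j] | j in ~: (\bigcup_(l : 'I_nA) \bigcup_(i in Xs l) clus l i)].

Definition Shat nX nY nA (Xs : 'I_nA -> {set 'I_nX})
  (Vh : 'I_nA -> 'M[R]_(nY, nX)) (b : 'I_nA -> R) : {set {set 'I_nY}} :=
  cluster_space Xs (fun l i => [set j | 0 < Vtilde (Vh l) (b l) j i]).

Definition Slim nX nY nA (Xs : 'I_nA -> {set 'I_nX})
  (V : 'I_nA -> 'M[R]_(nY, nX)) : {set {set 'I_nY}} :=
  cluster_space Xs (fun l i => [set j | 0 < V l j i]).

(* trajectories of N steps: (x_t, y_t), with a_t = pi y_t *)
Definition traj (nX nY N : nat) := (N.-tuple ('I_nX * 'I_nY))%type.

Section Traj.
Variables (nX nY nA : nat) (O : 'M[R]_(nY, nX)) (T : 'I_nA -> 'M[R]_nX)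
          (pi : 'I_nY -> 'I_nA) (mu : 'I_nX -> R).

Fixpoint chainP (prev : 'I_nX * 'I_nY) (s : seq ('I_nX * 'I_nY)) : R :=
  match s with
  | [::] => 1
  | q :: s' => T (pi prev.2) q.1 prev.1 * O q.2 q.1 * chainP q s'
  end.

Definition pathP (s : seq ('I_nX * 'I_nY)) : R :=
  match s with
  | [::] => 1
  | p :: s' => mu p.1 * O p.2 p.1 * chainP p s'
  end.

Definition Pr (N : nat) (E : pred (traj nX nY N)) : R :=
  \sum_(tau : traj nX nY N | E tau) pathP tau.

Definition Ncount (l : 'I_nA) (s : seq ('I_nX * 'I_nY)) : nat :=
  count (fun p => pi p.2 == l) s.
End Traj.

Definition consistent nX nY (O : 'M[R]_(nY, nX)) (S : {set {set 'I_nY}}) : bool :=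
  [forall C in S, forall j in C, forall j' in C,
     exists i, (j \in Ycl O i) && (j' \in Ycl O i)].

End ROMDP.

(* Once every action l that the policy can take in some state is played often
   enough, the estimation error of each column of V_2^(l) is below the threshold
   B_O^(l); then every observation kept by the thresholding has a positive true
   probability, hence lies in the support Y_i of its hidden state, which gives
   consistency.  Since B_O^(l) -> 0 as N(l) grows, for large N(l) the threshold is
   below half of every positive entry of V_2^(l), and thresholding recovers the
   supports exactly, i.e. the estimated space equals the limiting one.  It thus
   remains to see that every such action is played arbitrarily often with high
   probability: by irreducibility, from every state some observation triggering l
   is reached within M steps with probability bounded away from 0, so the
   probability of fewer than k occurrences of l in n steps decays geometrically
   in n, by induction on k. *)

From Pilot Require Import Defs.
From HB Require Import structures.
From mathcomp Require Import all_boot all_order all_algebra.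
From mathcomp Require Import reals exp.
From mathcomp Require Import ring lra.
Import Order.TTheory GRing.Theory Num.Theory.
Local Open Scope ring_scope.
Set Implicit Arguments. Unset Strict Implicit. Unset Printing Implicit Defensive.

Lemma big_tuple_cons (R : Type) (idx : R) (op : Monoid.com_law idx)
    (P : finType) n (f : n.+1.-tuple P -> R) :
  \big[op/idx]_(t : n.+1.-tuple P) f t =
  \big[op/idx]_(q : P) \big[op/idx]_(t : n.-tuple P) f [tuple of q :: t].
Proof.
rewrite pair_big /= (reindex (fun qt : P * n.-tuple P => [tuple of qt.1 :: qt.2])) //=.
exists (fun t : n.+1.-tuple P => (thead t, [tuple of behead t])).
  by move=> [q t] _ /=; congr pair; apply/val_inj.
by move=> [[|q s] hs] _; apply/val_inj.
Qed.

Lemma big_tuple0 (R : Type) (idx : R) (op : Monoid.law idx) (P : finType)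
    (f : 0.-tuple P -> R) :
  \big[op/idx]_(t : 0.-tuple P) f t = f [tuple].
Proof.
by rewrite (big_pred1 [tuple]) // => t; apply/esym/eqP/val_inj; case: t => [[]].
Qed.

Lemma eventually_fin (I : finType) (Q : I -> nat -> Prop) :
  (forall i, exists n0, forall n, (n0 <= n)%N -> Q i n) ->
  exists n0, forall i n, (n0 <= n)%N -> Q i n.
Proof.
case/fin_all_exists=> n0 hn0; exists (\max_i n0 i) => i n hn.
by apply: hn0; apply: leq_trans hn; apply: leq_bigmax.
Qed.

Lemma expr_bernoulli (R : realDomainType) (h : R) j :
  0 <= h <= 1 -> h ^+ j * (1 + j%:R * (1 - h)) <= 1.
Proof.
case/andP=> h0 h1; elim: j => [|j IH]; first by rewrite expr0 mul0r addr0 mulr1.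
have hj0 : 0 <= h ^+ j by rewrite exprn_ge0.
have hj1 : h ^+ j.+1 <= 1 by rewrite exprn_ile1.
have hIH : h * (h ^+ j * (1 + j%:R * (1 - h))) <= h by rewrite ler_piMr.
have hd : h ^+ j.+1 * (1 - h) <= 1 - h by rewrite ler_piMl // subr_ge0.
rewrite exprS -natr1 in hj1 hd *; nra.
Qed.

Lemma exists_expr_le (R : archiRealFieldType) (h e : R) :
  0 <= h < 1 -> 0 < e -> exists j, h ^+ j <= e.
Proof.
case/andP=> h0 h1 e0; set d := 1 - h.
have d0 : 0 < d by rewrite subr_gt0.
have ed0 : 0 < e * d by rewrite mulr_gt0.
exists (Num.Def.archi_bound (e * d)^-1); set j := Num.Def.archi_bound _.
have hj : 1 < j%:R * (e * d).
  by rewrite -ltr_pdivrMr // div1r archi_boundP // invr_ge0 ltW.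
have hb : h ^+ j * (1 + j%:R * d) <= 1 by apply: expr_bernoulli; rewrite h0 ltW.
have hj0 : 0 <= h ^+ j by rewrite exprn_ge0.
nra.
Qed.

Section Stochastic.
Variable R : realType.

Lemma colstoch_le1 m n (M : 'M[R]_(m, n)) i j : colstoch M -> M i j <= 1.
Proof.
by case=> h0 h1; rewrite -(h1 j) (bigD1 i) //= lerDl; apply: sumr_ge0.
Qed.

Lemma colstoch_mulmx m n p (A : 'M[R]_(m, n)) (B : 'M[R]_(n, p)) :
  colstoch A -> colstoch B -> colstoch (A *m B).
Proof.
case=> hA0 hA1 [hB0 hB1]; split=> [i j|j].
  by rewrite mxE; apply: sumr_ge0 => k _; rewrite mulr_ge0.
under eq_bigr do rewrite mxE.
rewrite exchange_big /= -(hB1 j); apply: eq_bigr => k _.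
by rewrite -mulr_suml hA1 mul1r.
Qed.

Lemma colstoch1 n : colstoch (1%:M : 'M[R]_n).
Proof.
split=> [i j|j]; first by rewrite mxE ler0n.
rewrite (bigD1 j) //= big1 ?addr0 => [|i hi]; first by rewrite mxE eqxx.
by rewrite mxE (negbTE hi).
Qed.

Lemma mxpowSr n (M : 'M[R]_n) k : mxpow M k.+1 = mxpow M k *m M.
Proof.
rewrite /mxpow /=; elim: k => [|k IH] /=; first by rewrite mulmx1 mul1mx.
by rewrite -mulmxA -IH.
Qed.

Lemma colstoch_mxpow n (M : 'M[R]_n) k : colstoch M -> colstoch (mxpow M k).
Proof.
move=> hM; elim: k => [|k IH]; first exact: colstoch1.
by rewrite mxpowSr; apply: colstoch_mulmx.
Qed.

End Stochastic.

Section Chain.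
Variables (R : realType) (nX nY nA : nat) (O : 'M[R]_(nY, nX))
  (T : 'I_nA -> 'M[R]_nX) (pi : 'I_nY -> 'I_nA).
Hypotheses (hT : forall l, colstoch (T l)) (hO : colstoch O).
Local Notation state := ('I_nX * 'I_nY)%type.
Local Notation Ind := (induced_chain O T pi).

Lemma T_ge0 l i' i : 0 <= T l i' i. Proof. by case: (hT l). Qed.
Lemma O_ge0 j i : 0 <= O j i. Proof. by case: hO. Qed.

Definition trans_prob (p q : state) : R := T (pi p.2) q.1 p.1 * O q.2 q.1.

Lemma trans_prob_ge0 p q : 0 <= trans_prob p q.
Proof. by rewrite mulr_ge0 ?T_ge0 ?O_ge0. Qed.

Lemma sum_trans_prob p : \sum_q trans_prob p q = 1.
Proof.
rewrite -(pair_bigA _ (fun x j => trans_prob p (x, j))) /=.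
rewrite -(proj2 (hT (pi p.2)) p.1); apply: eq_bigr => x _.
by rewrite /trans_prob /= -mulr_sumr (proj2 hO) mulr1.
Qed.

Lemma chainP_ge0 p s : 0 <= chainP O T pi p s.
Proof.
by elim: s p => [|q s IH] p /=; rewrite ?ler01 // mulr_ge0 ?(trans_prob_ge0 p q).
Qed.

Lemma colstoch_induced_chain : colstoch Ind.
Proof.
split=> [i' i|i].
  by rewrite mxE; apply: sumr_ge0 => j _; rewrite mulr_ge0 ?O_ge0 ?T_ge0.
under eq_bigr do rewrite mxE.
rewrite exchange_big /= -(proj2 hO i); apply: eq_bigr => j _.
by rewrite -mulr_sumr (proj2 (hT (pi j)) i) mulr1.
Qed.

Lemma mxpow_induced_chain_ge0 k i' i : 0 <= mxpow Ind k i' i.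
Proof. by case: (colstoch_mxpow k colstoch_induced_chain). Qed.

Section Hitting.
Variable l : 'I_nA.

Definition hits (q : state) : bool := pi q.2 == l.

(* The current state p is not counted: [no_hit_prob M p] is the probability
   that none of the M next states plays l, [few_hits_prob n k p] that fewer
   than k of the n next states do. *)
Fixpoint no_hit_prob (M : nat) (p : state) : R :=
  if M is M'.+1 then \sum_(q | ~~ hits q) trans_prob p q * no_hit_prob M' q
  else 1.

Definition few_hits_prob (n k : nat) (p : state) : R :=
  \sum_(t : n.-tuple state) chainP O T pi p t * (count hits t < k)%:R.

Lemma few_hits_probS n k p :
  few_hits_prob n.+1 k p = \sum_q trans_prob p q * few_hits_prob n (k - hits q) q.
Proof.
rewrite /few_hits_prob big_tuple_cons; apply: eq_bigr => q _; rewrite mulr_sumr.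
by apply: eq_bigr => t _ /=; rewrite ltn_subRL mulrA.
Qed.

Lemma few_hits_prob_le1 n k p : few_hits_prob n k p <= 1.
Proof.
elim: n k p => [|n IH] k p.
  by rewrite /few_hits_prob big_tuple0 /= mul1r; case: (0 < k)%N.
rewrite few_hits_probS -(sum_trans_prob p); apply: ler_sum => q _.
by rewrite ler_piMr ?trans_prob_ge0.
Qed.

Lemma le_few_hits_prob n k1 k2 p :
  (k1 <= k2)%N -> few_hits_prob n k1 p <= few_hits_prob n k2 p.
Proof.
move=> hk; apply: ler_sum => t _; apply: ler_wpM2l; first exact: chainP_ge0.
by case: ltnP => [h1|_]; rewrite ?ler0n ?(leq_trans h1 hk).
Qed.

Lemma few_hits_prob_boundD B n k :
  (forall q, few_hits_prob n k q <= B) ->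
  forall m q, few_hits_prob (m + n) k q <= B.
Proof.
move=> hB; elim=> [|m IH] // p; rewrite addSn few_hits_probS.
apply: (@le_trans _ _ (\sum_q trans_prob p q * B)).
  apply: ler_sum => q _; apply: ler_wpM2l; first exact: trans_prob_ge0.
  by apply: le_trans (IH q); apply: le_few_hits_prob; rewrite leq_subr.
by rewrite -mulr_suml sum_trans_prob mul1r.
Qed.

Lemma no_hit_prob_ge0 M p : 0 <= no_hit_prob M p.
Proof.
elim: M p => [|M IH] p /=; first exact: ler01.
by apply: sumr_ge0 => q _; rewrite mulr_ge0 ?trans_prob_ge0.
Qed.

Lemma no_hit_prob_le1 M p : no_hit_prob M p <= 1.
Proof.
elim: M p => [|M IH] p //=.
rewrite -(sum_trans_prob p) [leRHS](bigID hits) /= -[leLHS]add0r.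
apply: lerD; first by apply: sumr_ge0 => q _; apply: trans_prob_ge0.
by apply: ler_sum => q _; rewrite ler_piMr ?trans_prob_ge0.
Qed.

Lemma no_hit_probS_le M p : no_hit_prob M.+1 p <= no_hit_prob M p.
Proof.
elim: M p => [|M IH] p; first exact: no_hit_prob_le1.
rewrite [no_hit_prob M.+2 p]/= [no_hit_prob M.+1 p]/=.
by apply: ler_sum => q _; apply: ler_wpM2l; [exact: trans_prob_ge0 | exact: IH].
Qed.

Lemma le_no_hit_prob M M' p :
  (M <= M')%N -> no_hit_prob M' p <= no_hit_prob M p.
Proof.
move/subnK <-; elim: (M' - M)%N => [|d IH] //=.
exact: le_trans (no_hit_probS_le _ _) IH.
Qed.

Lemma few_hits_prob_split n k A B :
  (forall q, few_hits_prob n k.+1 q <= A) -> (forall q, few_hits_prob n k q <= B) ->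
  forall M p, few_hits_prob (M + n) k.+1 p <= B + no_hit_prob M p * (A - B).
Proof.
move=> hA hB; elim=> [|M IH] p; first by rewrite mul1r addrC subrK.
rewrite addSn few_hits_probS (bigID hits) /=.
apply: (@le_trans _ _ (\sum_(q | hits q) trans_prob p q * B +
   \sum_(q | ~~ hits q) trans_prob p q * (B + no_hit_prob M q * (A - B)))).
  apply: lerD; apply: ler_sum => q hq; apply: ler_wpM2l; try exact: trans_prob_ge0.
    by rewrite hq subn1 /=; apply: few_hits_prob_boundD.
  by rewrite (negbTE hq) subn0; apply: IH.
under [X in _ + X <= _]eq_bigr do rewrite mulrDr mulrA.
have hsum := sum_trans_prob p; rewrite (bigID hits) /= in hsum.
by rewrite big_split /= addrA -!mulr_suml -mulrDl hsum mul1r.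
Qed.

(* The hidden state m + 1 steps after p is i0 with probability
   [visit_prob m i0 p]: one step of T, then m steps of the induced chain. *)
Definition visit_prob (m : nat) (i0 : 'I_nX) (p : state) : R :=
  \sum_x T (pi p.2) x p.1 * mxpow Ind m i0 x.

Lemma visit_prob0 i0 p : visit_prob 0 i0 p = T (pi p.2) i0 p.1.
Proof.
rewrite /visit_prob (bigD1 i0) //= big1 ?addr0 => [|x hx].
  by rewrite mxE eqxx mulr1.
by rewrite mxE eq_sym (negbTE hx) mulr0.
Qed.

Lemma visit_probS m i0 p :
  visit_prob m.+1 i0 p = \sum_q trans_prob p q * visit_prob m i0 q.
Proof.
rewrite -(pair_bigA _ (fun x j => trans_prob p (x, j) * visit_prob m i0 (x, j))) /=.
rewrite {1}/visit_prob; apply: eq_bigr => x _; rewrite mxpowSr mxE mulr_sumr.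
have hInd y : Ind y x = \sum_j O j x * T (pi j) y x by rewrite mxE.
under [X in X = _]eq_bigr do rewrite hInd !mulr_sumr.
rewrite exchange_big /=; apply: eq_bigr => j _.
by rewrite /trans_prob /visit_prob /= mulr_sumr; apply: eq_bigr => y _; ring.
Qed.

Lemma visit_prob_ge0 m i0 p : 0 <= visit_prob m i0 p.
Proof. by apply: sumr_ge0 => x _; rewrite mulr_ge0 ?T_ge0 ?mxpow_induced_chain_ge0. Qed.

Lemma visit_prob_le1 m i0 p : visit_prob m i0 p <= 1.
Proof.
rewrite -(proj2 (hT (pi p.2)) p.1); apply: ler_sum => x _.
rewrite ler_piMr ?T_ge0 //.
exact: colstoch_le1 (colstoch_mxpow m colstoch_induced_chain).
Qed.

Lemma one_sub_no_hit_probS M p :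
  1 - no_hit_prob M.+1 p =
  \sum_(q | hits q) trans_prob p q +
  \sum_(q | ~~ hits q) trans_prob p q * (1 - no_hit_prob M q).
Proof.
have hsum := sum_trans_prob p; rewrite (bigID hits) /= in hsum.
under [X in _ = _ + X]eq_bigr do rewrite mulrBr mulr1.
by rewrite -{1}hsum sumrB addrA.
Qed.

Lemma visit_prob_le_hit i0 j0 : hits (i0, j0) -> forall m p,
  O j0 i0 * visit_prob m i0 p <= 1 - no_hit_prob m.+1 p.
Proof.
move=> hit0; elim=> [|m IH] p; rewrite one_sub_no_hit_probS.
  rewrite visit_prob0 (bigD1 (i0, j0)) //= mulrC -addrA lerDl.
  by rewrite addr_ge0 ?sumr_ge0 // => q _; rewrite ?subrr ?mulr0 ?trans_prob_ge0.
rewrite visit_probS mulr_sumr [leLHS](bigID hits) /=.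
apply: lerD; apply: ler_sum => q hq; rewrite mulrCA.
  rewrite ler_piMr ?trans_prob_ge0 // -(mulr1 1) ler_pM ?O_ge0 ?visit_prob_ge0 //.
    exact: colstoch_le1.
  exact: visit_prob_le1.
by apply: ler_wpM2l; [exact: trans_prob_ge0 | exact: IH].
Qed.

Lemma no_hit_prob_eventually_lt1 i0 j0 :
  irreducible_chain Ind -> hits (i0, j0) -> 0 < O j0 i0 ->
  forall p, exists M0, forall M, (M0 <= M)%N -> no_hit_prob M p < 1.
Proof.
move=> hirr hit0 hO0 p.
have [x hx] : exists x, 0 < T (pi p.2) x p.1.
  apply/existsP; apply: contraT; rewrite negb_exists => /forallP hle.
  have := proj2 (hT (pi p.2)) p.1; rewrite big1 => [/eqP|y _].
    by rewrite eq_sym oner_eq0.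
  by apply/eqP; rewrite eq_le T_ge0 andbT leNgt hle.
have [k hk] := hirr x i0.
exists k.+1 => M hM; apply: le_lt_trans (le_no_hit_prob p hM) _.
have hvisit : 0 < O j0 i0 * visit_prob k i0 p.
  rewrite mulr_gt0 // /visit_prob (bigD1 x) //= ltr_pwDl ?mulr_gt0 //.
  by apply: sumr_ge0 => y _; rewrite mulr_ge0 ?T_ge0 ?mxpow_induced_chain_ge0.
have := visit_prob_le_hit hit0 k p; lra.
Qed.

Lemma no_hit_prob_unif_lt1 i0 j0 :
  irreducible_chain Ind -> hits (i0, j0) -> 0 < O j0 i0 ->
  exists M h, 0 <= h < 1 /\ forall p, no_hit_prob M p <= h.
Proof.
move=> hirr hit0 hO0.
have [M hM] := eventually_fin (no_hit_prob_eventually_lt1 hirr hit0 hO0).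
exists M, (\big[Num.max/0]_p no_hit_prob M p); split=> [|p]; last exact: le_bigmax.
apply/andP; split; last by apply: bigmax_lt => // p _; apply: hM.
by apply: (big_ind (>= 0)) => // [x y hx _|p _]; rewrite ?le_max ?hx ?no_hit_prob_ge0.
Qed.

Lemma few_hits_prob_vanish M h :
  0 <= h < 1 -> (forall p, no_hit_prob M p <= h) ->
  forall k e, 0 < e -> exists n0, forall n, (n0 <= n)%N ->
    forall q, few_hits_prob n k q <= e.
Proof.
move=> hh hH; have /andP [h0 _] := hh; elim=> [|k IH] e e0.
  exists 0%N => n _ q; rewrite /few_hits_prob big1 ?ltW // => t _.
  by rewrite ltn0 mulr0.
have e20 : 0 < e / 2 by rewrite divr_gt0.
have [n1 hn1] := IH _ e20.
have [j hj] := exists_expr_le hh e20.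
have hB n q : (n1 <= n)%N -> few_hits_prob n k q <= e / 2 by move/hn1.
have hstep i q : few_hits_prob (i * M + n1) k.+1 q <= e / 2 + h ^+ i.
  elim: i q => [|i IHi] q.
    rewrite mul0n add0n expr0; apply: le_trans (few_hits_prob_le1 _ _ _) _.
    by rewrite lerDr ltW.
  rewrite mulSn -addnA.
  apply: le_trans (few_hits_prob_split IHi (fun q => hB _ q (leq_addl _ _)) M q) _.
  by rewrite addrAC subrr add0r exprS lerD2l ler_wpM2r ?exprn_ge0.
exists (j * M + n1)%N => n hn q; rewrite -(subnK hn).
apply: le_trans (few_hits_prob_boundD (hstep j) _ q) _.
by rewrite [leRHS](splitr e) lerD2l.
Qed.

End Hitting.

Section Trajectories.
Variable mu : 'I_nX -> R.
Hypothesis hmu : distribution mu.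
Local Notation Pr := (Pr O T pi mu).

Lemma pathP_ge0 (s : seq state) : 0 <= Defs.pathP O T pi mu s.
Proof.
case: s => [|p s] /=; first exact: ler01.
by rewrite !mulr_ge0 ?chainP_ge0 ?O_ge0 //; case: hmu.
Qed.

Lemma Pr_sub N (E1 E2 : pred (traj nX nY N)) :
  (forall t, E1 t -> E2 t) -> Pr E1 <= Pr E2.
Proof.
move=> h; rewrite /Pr [leLHS]big_mkcond [leRHS]big_mkcond /=.
apply: ler_sum => t _; case: ifP => [/h -> //|_].
by case: ifP => // _; exact: pathP_ge0.
Qed.

Lemma Pr_exists_le N (I : finType) (E : I -> pred (traj nX nY N)) :
  Pr (fun t => [exists i, E i t]) <= \sum_i Pr (E i).
Proof.
rewrite /Pr big_mkcond /=.
under [leRHS]eq_bigr do rewrite big_mkcond.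
rewrite [leRHS]exchange_big /=; apply: ler_sum => t _.
case: existsP => [[i hi] | _].
  rewrite (bigD1 i) //= hi lerDl; apply: sumr_ge0 => j _.
  by case: ifP => // _; exact: pathP_ge0.
by apply: sumr_ge0 => i _; case: ifP => // _; exact: pathP_ge0.
Qed.

Lemma Pr_and_ge N (E1 E2 E : pred (traj nX nY N)) a b :
  1 - a <= Pr E1 -> Pr (predC E2) <= b -> (forall t, E1 t -> E2 t -> E t) ->
  1 - a - b <= Pr E.
Proof.
move=> h1 h2 hE.
have : Pr E1 - Pr (predC E2) <= Pr E.
  rewrite lerBlDr /Pr [in leLHS]big_mkcond [X in _ <= X + _]big_mkcond.
  rewrite [X in _ <= _ + X]big_mkcond -big_split /=.
  apply: ler_sum => t _; have := pathP_ge0 t; have := hE t.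
  by case: (E1 t); case: (E2 t); case: (E t) => /= h; lra.
lra.
Qed.

Lemma sum_init_prob : \sum_(q : state) mu q.1 * O q.2 q.1 = 1.
Proof.
rewrite -(pair_bigA _ (fun x j => mu x * O j x)) /= -(proj2 hmu).
by apply: eq_bigr => x _; rewrite -mulr_sumr (proj2 hO) mulr1.
Qed.

Lemma Pr_Ncount_lt (l : 'I_nA) n K e :
  (forall q, few_hits_prob l n K q <= e) ->
  Pr (fun t : traj nX nY n.+1 => (Ncount pi l t < K)%N) <= e.
Proof.
move=> he; rewrite /Pr big_mkcond /=.
rewrite (eq_bigr (fun t : traj nX nY n.+1 =>
  Defs.pathP O T pi mu t * (Ncount pi l t < K)%:R)) => [|t _]; last first.
  by case: ifP; rewrite ?mulr1 ?mulr0.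
rewrite big_tuple_cons.
apply: (@le_trans _ _ (\sum_(q : state) mu q.1 * O q.2 q.1 * e)); last first.
  by rewrite -mulr_suml sum_init_prob mul1r.
apply: ler_sum => q _.
have -> : \sum_(t : n.-tuple state) Defs.pathP O T pi mu [tuple of q :: t] *
    (Ncount pi l [tuple of q :: t] < K)%:R =
    mu q.1 * O q.2 q.1 * few_hits_prob l n (K - hits l q) q.
  rewrite /few_hits_prob mulr_sumr; apply: eq_bigr => t _ /=.
  by rewrite /Ncount /= ltn_subRL mulrA.
apply: ler_wpM2l; first by rewrite mulr_ge0 ?O_ge0 //; case: hmu.
by apply: le_trans (he q); apply: le_few_hits_prob; rewrite leq_subr.
Qed.

Lemma Pr_Ncount_lt_vanish (l : 'I_nA) i0 j0 :
  irreducible_chain Ind -> 0 < O j0 i0 -> pi j0 = l ->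
  forall K e, 0 < e -> exists N0, forall N, (N0 <= N)%N ->
    Pr (fun t : traj nX nY N => (Ncount pi l t < K)%N) <= e.
Proof.
move=> hirr hO0 hpi K e e0.
have hit0 : hits l (i0, j0) by rewrite /hits hpi.
have [M [h [hh hH]]] := no_hit_prob_unif_lt1 hirr hit0 hO0.
have [n0 hn0] := few_hits_prob_vanish hh hH K e0.
by exists n0.+1 => -[|n] // hn; apply: Pr_Ncount_lt; apply: hn0.
Qed.

Lemma Pr_Ncount_all_ge (acts : pred 'I_nA) :
  irreducible_chain Ind ->
  (forall l, acts l -> exists i j, 0 < O j i /\ pi j = l) ->
  forall K eps, 0 < eps -> exists N0, forall N, (N0 <= N)%N ->
    Pr (predC (fun t : traj nX nY N =>
          [forall l, acts l ==> (K <= Ncount pi l t)%N])) <= eps.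
Proof.
move=> hirr hwit K eps eps0; pose e := eps / nA.+1%:R.
have e0 : 0 < e by rewrite divr_gt0.
have [N0 hN0] : exists N0, forall l N, (N0 <= N)%N ->
    Pr (fun t : traj nX nY N => acts l && (Ncount pi l t < K)%N) <= e.
  apply: eventually_fin => l; case: (boolP (acts l)) => hl; last first.
    by exists 0%N => N _; rewrite /Pr big_pred0 ?ltW // => t; rewrite (negbTE hl).
  have [i [j [hO0 hpi]]] := hwit l hl.
  have [N0 hN0] := Pr_Ncount_lt_vanish hirr hO0 hpi K e0.
  by exists N0 => N /hN0; apply: le_trans; apply: Pr_sub => t /andP [].
exists N0 => N hN.
apply: le_trans (Pr_sub (E2 := fun t => [exists l, acts l && (Ncount pi l t < K)%N]) _) _.
  move=> t /=; rewrite negb_forall => /existsP [l]; rewrite negb_imply -ltnNge => hl.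
  by apply/existsP; exists l.
apply: le_trans (Pr_exists_le _) _.
apply: le_trans (ler_sum _ (fun l _ => hN0 l N hN)) _.
rewrite sumr_const card_ord -mulr_natl mulrCA ler_piMr ?ltW //.
by rewrite ltr_pdivrMr ?ltr0Sn // mul1r ltr_nat.
Qed.

End Trajectories.
End Chain.

Section Estimation.
Variable R : realType.

Lemma ler_norm_colnorm m (v : 'I_m -> R) j : `|v j| <= colnorm v.
Proof.
rewrite /colnorm -sqrtr_sqr; apply: ler_wsqrtr.
by rewrite (bigD1 j) //= lerDl; apply: sumr_ge0 => k _; apply: sqr_ge0.
Qed.

Lemma threshold_gt0 m (v w : 'I_m -> R) b j :
  colnorm (fun j => v j - w j) < b -> b <= w j -> 0 < v j.
Proof.
move=> hvw hb; have := ler_norm_colnorm (fun j => v j - w j) j.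
have : w j - v j <= `|v j - w j| by rewrite distrC ler_norm.
lra.
Qed.

Lemma thresholdE m (v w : 'I_m -> R) b j :
  colnorm (fun j => v j - w j) < b -> (0 < v j -> b <= v j / 2) ->
  (b <= w j) = (0 < v j).
Proof.
move=> hvw hb; apply/idP/idP; first exact: threshold_gt0 hvw.
move=> hv; have := hb hv; have := ler_norm_colnorm (fun j => v j - w j) j.
have : v j - w j <= `|v j - w j| by rewrite ler_norm.
lra.
Qed.

Lemma Vtilde_gt0 nX nY (Vh : 'M[R]_(nY, nX)) b j i :
  (0 < Vtilde Vh b j i) = (b <= Vh j i).
Proof. by rewrite mxE; case: ifP; rewrite ?ltr01 ?ltxx. Qed.

Lemma eq_cluster_space nX nY nA (Xs : 'I_nA -> {set 'I_nX})
    (f g : 'I_nA -> 'I_nX -> {set 'I_nY}) :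
  (forall l i, i \in Xs l -> f l i = g l i) ->
  cluster_space Xs f = cluster_space Xs g.
Proof.
move=> hfg; rewrite /cluster_space.
have -> : [set f l i | l in 'I_nA, i in Xs l] = [set g l i | l in 'I_nA, i in Xs l].
  by apply/setP => C; apply/imset2P/imset2P => -[l i hl hi ->];
    exists l i; rewrite ?hfg.
by congr (_ :|: [set [set j] | j in ~: _]); apply: eq_bigr => l _;
  apply: eq_bigr => i; apply: hfg.
Qed.

Lemma consistent_Shat nX nY nA (O : 'M[R]_(nY, nX)) (Xs : 'I_nA -> {set 'I_nX})
    (V Vh : 'I_nA -> 'M[R]_(nY, nX)) (b : 'I_nA -> R) :
  (forall j, exists i, 0 < O j i) -> (forall l j i, 0 < V l j i -> 0 < O j i) ->
  (forall l i, i \in Xs l -> colnorm (fun j => V l j i - Vh l j i) < b l) ->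
  consistent O (Shat Xs Vh b).
Proof.
move=> hOj hVO hacc; apply/forallP => C; apply/implyP; rewrite inE.
case/orP=> [/imset2P [l i _ hi ->] | /imsetP [j0 _ ->]]; last first.
  have [i hi] := hOj j0.
  by apply/forall_inP => j /set1P -> {j}; apply/forall_inP => j' /set1P ->;
    apply/existsP; exists i; rewrite !inE hi.
apply/forall_inP => j; rewrite inE Vtilde_gt0 => hj.
apply/forall_inP => j'; rewrite inE Vtilde_gt0 => hj'.
by apply/existsP; exists i; rewrite !inE (hVO l) ?(hVO l j' i) //;
  apply: threshold_gt0 (hacc l i hi) _.
Qed.

Lemma Shat_eq_Slim nX nY nA (Xs : 'I_nA -> {set 'I_nX})
    (V Vh : 'I_nA -> 'M[R]_(nY, nX)) (b : 'I_nA -> R) :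
  (forall l i, i \in Xs l -> colnorm (fun j => V l j i - Vh l j i) < b l /\
     forall j, 0 < V l j i -> b l <= V l j i / 2) ->
  Shat Xs Vh b = Slim Xs V.
Proof.
move=> hacc; apply: eq_cluster_space => l i /hacc [hvw hb].
by apply/setP => j; rewrite !inE Vtilde_gt0 (thresholdE hvw (hb j)).
Qed.

Lemma BO_le_eventually (C2 : R) nY delta v : 0 < C2 -> 0 < v ->
  exists n0, forall n, (n0 <= n)%N -> BO C2 nY delta n <= v.
Proof.
move=> hC hv; rewrite /BO; set L := ln _; set d := v / C2.
have d0 : 0 < d by rewrite divr_gt0.
have dd0 : 0 < d ^+ 2 by rewrite exprn_gt0.
exists (Num.Def.archi_bound (`|L| / d ^+ 2)).+1 => n hn.
have n0 : 0 < n%:R :> R by rewrite ltr0n; apply: leq_trans hn.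
have hLn : `|L| < n%:R * d ^+ 2.
  rewrite -ltr_pdivrMr //; apply: lt_trans (archi_boundP _) _.
    by rewrite divr_ge0 // ltW.
  by rewrite ltr_nat.
have hsq : Num.sqrt (L / n%:R) <= d.
  case: (lerP L 0) => hL.
    by rewrite ler0_sqrtr ?(ltW d0) // pmulr_lle0 ?invr_gt0.
  rewrite -(ger0_norm (ltW d0)) -sqrtr_sqr; apply: ler_wsqrtr.
  by rewrite ler_pdivrMr // mulrC ltW // -(gtr0_norm hL).
have -> : v = C2 * d by rewrite /d mulrC divfK ?gt_eqF.
by rewrite ler_pM2l.
Qed.

Lemma BO_le_half_eventually (C2 : R) nX nY nA delta
    (V : 'I_nA -> 'M[R]_(nY, nX)) : 0 < C2 ->
  exists K, forall n, (K <= n)%N ->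
    forall l i j, 0 < V l j i -> BO C2 nY delta n <= V l j i / 2.
Proof.
move=> hC.
have /eventually_fin [K hK] : forall t : 'I_nA * 'I_nX * 'I_nY,
    exists n0, forall n, (n0 <= n)%N ->
      0 < V t.1.1 t.2 t.1.2 -> BO C2 nY delta n <= V t.1.1 t.2 t.1.2 / 2.
  move=> [[l i] j] /=; case: (boolP (0 < V l j i)) => hv; last first.
    by exists 0%N => n _ hv'; case/negP: hv.
  have [n0 hn0] := BO_le_eventually nY delta hC (divr_gt0 hv (ltr0Sn _ 1)).
  by exists n0 => n /hn0.
by exists K => n hn l i j; apply: (hK (l, i, j)).
Qed.

Lemma V2_gt0_O nX nY nA (O : 'M[R]_(nY, nX)) pi rho (l : 'I_nA) j i :
  colstoch O -> 0 < V2 O pi rho l j i -> 0 < O j i.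
Proof.
move=> hO hV; rewrite lt_def (O_ge0 hO) andbT; move: hV.
by rewrite /V2 mxE /joint; apply: contraTneq => ->; rewrite mulr0 mul0r mul0r ltxx.
Qed.

Lemma omega_gt0_action nX nY nA (O : 'M[R]_(nY, nX)) pi rho (l : 'I_nA) i :
  colstoch O -> 0 < omega O pi rho l i -> exists j, 0 < O j i /\ pi j = l.
Proof.
move=> hO hom.
have /existsP [j /andP [hj /eqP hpi]] : [exists j, (0 < O j i) && (pi j == l)].
  apply: contraTT hom => /existsPn hnone; rewrite /omega big1 ?mul0r ?ltxx // => j _.
  have := hnone j; rewrite negb_and /joint => /orP [hj | /negbTE ->]; last first.
    by rewrite mulr0.
  have -> : O j i = 0 by apply/eqP; rewrite eq_le (O_ge0 hO) andbT leNgt.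
  by rewrite mulr0 mul0r.
by exists j.
Qed.

End Estimation.

Unset Implicit Arguments. Set Strict Implicit.

Theorem corollary4 (R : realType) (nX nY nA : nat)
  (T : 'I_nA -> 'M[R]_nX) (O : 'M[R]_(nY, nX)) (r : 'I_nX -> 'I_nA -> R)
  (pi : 'I_nY -> 'I_nA) (rho mu : 'I_nX -> R) (C2 : R) (thr : R -> nat)
  (Vhat : forall N : nat, traj nX nY N -> 'I_nA -> 'M[R]_(nY, nX))
  (hXY : (nX <= nY)%N)
  (hT : forall l, colstoch (T l))
  (hO : colstoch O)
  (hOu : forall j, exists! i, 0 < O j i)
  (hr : forall i l, 0 <= r i l <= 1)
  (hA1 : forall p : 'I_nY -> 'I_nA, ergodic_chain (induced_chain O T p))
  (hA2 : forall l, \rank (T l) = nX)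
  (hrho : stationary (induced_chain O T pi) rho)
  (hmu : distribution mu)
  (hC2 : 0 < C2)
  (hest : forall delta : R, 0 < delta < 1 -> forall N : nat,
     1 - delta <= Pr O T pi mu (fun tau : traj nX nY N =>
       [forall l, (thr delta < Ncount pi l tau)%N ==>
          [forall i in Xpi O pi rho l,
             colnorm (fun j => V2 O pi rho l j i - Vhat N tau l j i)
             < BO C2 nY delta (Ncount pi l tau)]])) :
  (forall delta : R, 0 < delta < 1 -> forall N : nat,
     1 - delta <= Pr O T pi mu (fun tau : traj nX nY N =>
       [forall l, (Xpi O pi rho l != set0) ==> (thr delta < Ncount pi l tau)%N]
       ==> consistent O (Shat (Xpi O pi rho) (Vhat N tau)
                           (fun l => BO C2 nY delta (Ncount pi l tau)))))
  /\
  (forall delta : R, 0 < delta < 1 -> forall eps : R, 0 < eps ->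
     exists N0 : nat, forall N : nat, (N0 <= N)%N ->
       1 - delta - eps <= Pr O T pi mu (fun tau : traj nX nY N =>
         Shat (Xpi O pi rho) (Vhat N tau)
              (fun l => BO C2 nY delta (Ncount pi l tau))
         == Slim (Xpi O pi rho) (V2 O pi rho))).
Proof.
have hwit l : Xpi O pi rho l != set0 -> exists i j, 0 < O j i /\ pi j = l.
  by case/set0Pn => i; rewrite inE => /(omega_gt0_action hO) [j hj]; exists i, j.
split=> [delta hd N | delta hd eps heps].
  apply: le_trans (hest delta hd N) _; apply: (Pr_sub pi hT hO hmu) => tau hacc.
  apply/implyP => hcnt; apply: (consistent_Shat (V := V2 O pi rho)) => [j|l j i|l i hi].
  - by have [i [hi _]] := hOu j; exists i.
  - exact: V2_gt0_O.
  - have /(implyP (forallP hcnt l)) hl : Xpi O pi rho l != set0 by apply/set0Pn; exists i.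
    by move: (implyP (forallP hacc l) hl) => /forall_inP; apply.
have [K hK] := BO_le_half_eventually delta (V2 O pi rho) hC2.
have [N0 hN0] := Pr_Ncount_all_ge hT hO hmu (proj1 (hA1 pi)) hwit
  (maxn K (thr delta).+1) heps.
exists N0 => N hN.
apply: (Pr_and_ge hT hO hmu (hest delta hd N) (hN0 N hN)) => tau hacc hcnt.
apply/eqP/Shat_eq_Slim => l i hi.
have /(implyP (forallP hcnt l)) : Xpi O pi rho l != set0 by apply/set0Pn; exists i.
rewrite geq_max => /andP [hKn hl]; split; last by move=> j; apply: hK.
by move: (implyP (forallP hacc l) hl) => /forall_inP; apply.
Qed.
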